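(* Let $a\geq 3$ and $m\geq 2a^2-a+2$ be integers, and suppose $[C(m,a)]$ is colored with red and blue so that there is no monochromatic solution of $L(m,a)$ in $[C(m,a)]$, with $a-2$ red and $a-1$ blue. Then $m-2$ is red and $m-3$ is blue.
   Context: For integers $m\geq 3$, $a\geq 1$, $L(m,a)$ denotes the equation $x_1+x_2+\cdots+x_{m-1}=a x_m$. For a positive integer $n$, $[n]=\{1,\dots,n\}$. A solution of $L(m,a)$ in $[n]$ is an $m$-tuple $(x_1,\dots,x_m)\in[n]^m$ (entries not necessarily distinct) satisfying the equation; given a 2-coloring of $[n]$, it is monochromatic if all $x_i$ have the same color. $C(m,a)$ denotes $\left\lceil \frac{m-1}{a}\left\lceil \frac{m-1}{a}\right\rceil\right\rceil$. *)

From mathcomp Require Import all_boot.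
Set Implicit Arguments. Unset Strict Implicit. Unset Printing Implicit Defensive.

Definition ceil_div (p q : nat) : nat := (p + q - 1) %/ q.

Definition Cma (m a : nat) : nat := ceil_div ((m - 1) * ceil_div (m - 1) a) a.

(* A solution of L(m,a): x_1+...+x_{m-1} = a x_m, written with 0-based indices
   x 0, ..., x (m-1), all entries in [n] = {1..n}. *)
Definition is_solution (m a n : nat) (x : nat -> nat) : Prop :=
  (forall i, i < m -> 1 <= x i <= n) /\
  \sum_(0 <= i < m.-1) x i = a * x m.-1.

(* A 2-colouring of [n] is a map col : nat -> bool (true = red, false = blue);
   values outside [n] are irrelevant. *)
Definition monochromatic (m : nat) (col : nat -> bool) (x : nat -> nat) : Prop :=
  forall i, i < m -> col (x i) = col (x 0).

Definition no_mono_solution (m a n : nat) (col : nat -> bool) : Prop :=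
  forall x, is_solution m a n x -> ~ monochromatic m col x.

From mathcomp Require Import all_boot.
From mathcomp Require Import zify.
Set Implicit Arguments. Unset Strict Implicit. Unset Printing Implicit Defensive.

(* For 0 < c < a the tuple made of c copies of t := m-1-c,
   then m-1-c copies of s := a-c, and last entry t, solves L(m,a):
   c*t + (m-1-c)*s = c*t + t*(a-c) = a*t.  Its entries are at most m-1, and
   m-1 <= C(m,a) as soon as m >= a^2-a+2, so a colouring of [C(m,a)] with no
   monochromatic solution must give m-1-c and a-c different colours.
   Taking c = 1 (against the blue a-1) and c = 2 (against the red a-2)
   yields that m-2 is red and m-3 is blue. *)

Definition two_valued (m c t s : nat) (i : nat) : nat :=
  if i < c then t else if i == m.-1 then t else s.

Lemma sum_two_valued m c t s : c <= m.-1 ->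
  \sum_(0 <= i < m.-1) two_valued m c t s i = c * t + (m.-1 - c) * s.
Proof.
move=> le_c_m.
rewrite (@big_cat_nat _ _ _ c 0 m.-1 _ _ (leq0n c) le_c_m) /=.
rewrite (eq_big_nat _ _ (F2 := fun=> t)); last first.
  by move=> i /andP [_ lt_i_c]; rewrite /two_valued lt_i_c.
rewrite [X in _ + X](eq_big_nat _ _ (F2 := fun=> s)); last first.
  by move=> i /andP [le_c_i lt_i_m]; rewrite /two_valued ltnNge le_c_i ltn_eqF.
by rewrite !sum_nat_const_nat subn0.
Qed.

Lemma balanced_solution m a n c : 0 < c < a -> c < m.-1 ->
  m.-1 - c <= n -> a - c <= n ->
  is_solution m a n (two_valued m c (m.-1 - c) (a - c)).
Proof.
move=> /andP [c_gt0 lt_c_a] lt_c_m le_t_n le_s_n; split.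
  move=> i _; rewrite /two_valued.
  by case: (i < c); [|case: (i == m.-1)]; lia.
rewrite sum_two_valued ?(ltnW lt_c_m) // /two_valued ltnNge (ltnW lt_c_m) eqxx.
by rewrite [_ * (a - c)]mulnC -mulnDl subnKC ?(ltnW lt_c_a).
Qed.

Lemma two_valued_mono m c t s (col : nat -> bool) : 0 < c -> col t = col s ->
  monochromatic m col (two_valued m c t s).
Proof.
move=> c_gt0 col_ts i _; rewrite /two_valued c_gt0.
by case: (i < c); [|case: (i == m.-1)].
Qed.

(* C(m,a) >= m-1 once ceil((m-1)/a) >= a, i.e. once m >= a^2 - a + 2. *)
Lemma Cma_ge m a : 0 < a -> a * a - a + 2 <= m -> m - 1 <= Cma m a.
Proof.
move=> a_gt0 hm; rewrite /Cma /ceil_div.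
have a_le_ceil : a <= (m - 1 + a - 1) %/ a by rewrite leq_divRL //; lia.
rewrite leq_divRL //.
apply: (leq_trans (leq_mul (leqnn (m - 1)) a_le_ceil)); lia.
Qed.

Lemma colours_alternate m a n col c : no_mono_solution m a n col ->
  0 < c < a -> c < m.-1 -> m.-1 - c <= n -> a - c <= n ->
  col (m.-1 - c) = ~~ col (a - c).
Proof.
move=> no_mono hc lt_c_m le_t_n le_s_n.
have sol := balanced_solution hc lt_c_m le_t_n le_s_n.
have same_colour : col (m.-1 - c) = col (a - c) -> False.
  by move=> col_ts; apply: (no_mono _ sol); apply: two_valued_mono; case/andP: hc.
by case: (col _) (col _) same_colour => [] [] // /(_ erefl).
Qed.

Theorem lemma2 (a m : nat) (col : nat -> bool) :
  3 <= a ->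
  2 * a ^ 2 - a + 2 <= m ->
  no_mono_solution m a (Cma m a) col ->
  col (a - 2) = true ->
  col (a - 1) = false ->
  col (m - 2) = true /\ col (m - 3) = false.
Proof.
move=> a_ge3 hm no_mono red_a2 blue_a1.
have m_big : a * a - a + 2 <= m /\ a + 3 <= m.
  rewrite expnS expn1 in hm; split; first lia.
  by apply: leq_trans hm; nia.
have le_m_C : m - 1 <= Cma m a by apply: Cma_ge; lia.
have alt c : 0 < c < a -> col (m.-1 - c) = ~~ col (a - c).
  move=> hc; have [c_gt0 lt_c_a] := andP hc.
  by apply: colours_alternate no_mono hc _ _ _; lia.
have -> : m - 2 = m.-1 - 1 by lia.
have -> : m - 3 = m.-1 - 2 by lia.
by rewrite !alt ?red_a2 ?blue_a1 //; lia.
Qed.
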